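(* Let $\Lambda=(\lambda_{ij})$ be the transition intensity matrix of an ergodic continuous-time Markov chain on $\mathbb{S}=\{a_1,\dots,a_d\}$ (distinct points). Let $N_s$ be a $d\times d$ matrix-valued process whose off-diagonal entries $N^{ij}_s$, $i\ne j$, are independent Poisson processes with intensities $\lambda_{ij}$, and whose diagonal entries are $N^{ii}_s=-\sum_{j\ne i}N^{ij}_s$. Let $\eta_0$ and $\tilde\eta_0$ be random vectors with values in the standard basis $\{e_1,\dots,e_d\}$ of $\mathbb{R}^d$, independent of each other and of $N$, and let $\eta,\tilde\eta$ be the solutions of the Itô equations $$\eta_t=\eta_0+\int_0^t dN_s^*\,\eta_{s-},\qquad \tilde\eta_t=\tilde\eta_0+\int_0^t dN_s^*\,\tilde\eta_{s-}$$ (driven by the same $N$). Set $X_t=\sum_{i=1}^d a_i\eta_t(i)$, $\tilde X_t=\sum_{i=1}^d a_i\tilde\eta_t(i)$ and $\tau=\inf\{t\ge0: X_t=\tilde X_t\}$ (with $\inf\emptyset=\infty$). Then almost surely $\lim_{n\to\infty}\mathbf{1}\{\tau\ge n\}=0$.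
   Context: A continuous-time Markov chain with intensity matrix $\Lambda$ is ergodic if the limits $\mu_i=\lim_{t\to\infty}\mathsf{P}(X_t=a_i)$ exist, are strictly positive and are independent of the initial distribution. Under the construction above, $\eta_t$ stays in the standard basis and $X$, $\tilde X$ are Markov chains with intensity matrix $\Lambda$. *)

From HB Require Import structures.
From mathcomp Require Import all_boot all_order all_algebra.
From mathcomp Require Import all_classical all_reals all_analysis.
Set Implicit Arguments. Unset Strict Implicit. Unset Printing Implicit Defensive.
Import Order.TTheory GRing.Theory Num.Theory.
Import numFieldNormedType.Exports.
Local Open Scope classical_set_scope.
Local Open Scope ring_scope.

Definition intensity_matrix (R : realType) (d : nat) (L : 'M[R]_d) : Prop :=
  (forall i j : 'I_d, i != j -> 0 <= L i j) /\
  (forall i : 'I_d, L i i = - \sum_(j < d | j != i) L i j).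

(* Entry (i,j) of the transition matrix P(t) = exp(t L) of the chain with
   intensity matrix L, i.e. P(X_t = a_j | X_0 = a_i). *)
Definition trans_entry (R : realType) (d : nat) (L : 'M[R]_d) (t : R)
    (i j : 'I_d) : R :=
  lim ((fun m : nat => \sum_(k < m) (t ^+ k / (k`!)%:R) * (L ^+ k) i j) @ \oo).

(* Ergodicity: lim_{t->oo} P(X_t = a_j) = mu_j > 0, independently of the
   initial distribution, i.e. every row of P(t) converges to the same mu > 0. *)
Definition ergodic_intensity (R : realType) (d : nat) (L : 'M[R]_d) : Prop :=
  exists mu : 'I_d -> R, (forall j, 0 < mu j) /\
    forall i j : 'I_d, trans_entry L t i j @[t --> +oo] --> mu j.

Definition poisson_process (R : realType) (dm : measure_display)
    (Omega : measurableType dm) (P : probability Omega R) (lam : R)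
    (N : R -> Omega -> R) : Prop :=
  (forall t, measurable_fun setT (N t)) /\
  [/\ forall w, N 0 w = 0,
      forall w s t, 0 <= s -> s <= t -> N s w <= N t w,
      forall w t, 0 <= t -> (exists n : nat, N t w = n%:R),
      forall w t, 0 <= t -> (N x w @[x --> t^'+] --> N t w) &
      forall s t (k : nat), 0 <= s -> s <= t ->
        P [set w | N t w - N s w = k%:R] =
        (expR (- (lam * (t - s))) * (lam * (t - s)) ^+ k / (k`!)%:R)%:E ].

Definition preim_class (Omega T : Type) (X : Omega -> T) (M : set (set T))
  : set (set Omega) := [set X @^-1` B | B in M].

(* Mutual independence of a finite family of classes of events (product rule;
   all classes used below contain setT, so subfamilies are covered). *)
Definition indep_classes (R : realType) (dm : measure_display)
    (Omega : measurableType dm) (P : probability Omega R) (I : finType)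
    (C : I -> set (set Omega)) : Prop :=
  forall E : I -> set Omega, (forall i, C i (E i)) ->
    fine (P (\bigcap_i E i)) = \prod_(i : I) fine (P (E i)).

(* This encodes: the N^{ij} (i<>j) are independent
   processes with independent increments, and eta0, eta0' are independent of
   each other and of N. *)
Definition joint_indep (R : realType) (dm : measure_display)
    (Omega : measurableType dm) (P : probability Omega R) (d : nat)
    (N : 'I_d -> 'I_d -> R -> Omega -> R) (eta0 eta0' : Omega -> 'I_d) : Prop :=
  forall (n : nat) (t : nat -> R), 0 <= t 0%N -> (forall k, t k <= t k.+1) ->
    indep_classes P (fun x : ('I_d * 'I_d * 'I_n) + bool =>
      match x with
      | inl (i, j, k) =>
          if i == j then [set setT]
          else preim_class (fun w => N i j (t k.+1) w - N i j (t k) w)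
                 [set B : set R | measurable B]
      | inr false => preim_class eta0 setT
      | inr true => preim_class eta0' setT
      end).

(* Left-point Riemann(-Ito) sums on the uniform grid of mesh t/m for the
   j-th component of  int_0^t dN_s^* eta_{s-}  =  sum_i int_0^t eta_{s-}(i) dN^{ij}_s. *)
Definition ito_sum (R : realType) (Omega : Type) (d : nat)
    (N : 'I_d -> 'I_d -> R -> Omega -> R) (eta : R -> Omega -> 'I_d -> R)
    (t : R) (w : Omega) (j : 'I_d) (m : nat) : R :=
  \sum_(k < m) \sum_(i < d)
     eta (k%:R * t / m%:R) w i *
       (N i j ((k.+1)%:R * t / m%:R) w - N i j (k%:R * t / m%:R) w).

(* eta solves  eta_t = eta_0 + int_0^t dN_s^* eta_{s-}  (a.s., for all t >= 0),
   where eta_0 = e_{eta0} is the standard basis vector indexed by eta0. *)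
Definition solves_ito (R : realType) (dm : measure_display)
    (Omega : measurableType dm) (P : probability Omega R) (d : nat)
    (N : 'I_d -> 'I_d -> R -> Omega -> R) (eta0 : Omega -> 'I_d)
    (eta : R -> Omega -> 'I_d -> R) : Prop :=
  {ae P, forall w, forall t, 0 <= t -> forall j : 'I_d,
     ito_sum N eta t w j m @[m --> \oo] --> eta t w j - (eta0 w == j)%:R}.

Definition state_proc (R : realType) (Omega : Type) (d : nat) (a : 'I_d -> R)
    (eta : R -> Omega -> 'I_d -> R) (t : R) (w : Omega) : R :=
  \sum_(i < d) a i * eta t w i.

Definition meet_time (R : realType) (Omega : Type) (X X' : R -> Omega -> R)
    (w : Omega) : \bar R :=
  ereal_inf [set t%:E | t in [set t : R | 0 <= t /\ X t w = X' t w]].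

From HB Require Import structures.
From mathcomp Require Import all_boot all_order all_algebra.
From mathcomp Require Import all_classical all_reals all_analysis.
From mathcomp Require Import ring measurable_realfun.
Import Order.TTheory GRing.Theory Num.Theory.
Import numFieldNormedType.Exports.
Local Open Scope classical_set_scope.
Local Open Scope ring_scope.
Set Implicit Arguments. Unset Strict Implicit. Unset Printing Implicit Defensive.

(* Ergodicity makes every state reachable along edges of positive rate (the
   entry of exp(tL) from x to a state unreachable from x vanishes, whereas its
   limit is positive), so some finite sequence [q] of such moves sends all
   states to one common state. Cut time into blocks of [size q] unit slots.
   With a fixed positive probability, in the [j]-th slot of a block exactly one
   jump occurs, namely of the counter of the [j]-th move of [q]; by
   independence of the increments, almost surely some block behaves so.
   Pathwise, any solution of the Ito equation driven by the counters follows
   the embedded jump chain of the counters, so across such a block both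
   solutions are moved along [q] and they coincide at its end. *)

Section Reachability.
Variables (R : numDomainType) (d : nat) (L : 'M[R]_d).

Inductive reachable : 'I_d -> 'I_d -> Prop :=
| reachable_refl x : reachable x x
| reachable_step x y z : x != y -> 0 < L x y -> reachable y z -> reachable x z.

Lemma reachable_rcons x y z : reachable x y -> y != z -> 0 < L y z -> reachable x z.
Proof.
elim=> [u|u v w uv Luv _ IH] yz Lyz.
- exact: reachable_step yz Lyz (reachable_refl z).
- exact: reachable_step uv Luv (IH yz Lyz).
Qed.

Lemma unreachable_expr_eq0 : (forall i j, i != j -> 0 <= L i j) ->
  forall x y, ~ reachable x y -> forall k, (L ^+ k) x y = 0.
Proof.
move=> L_ge0 x y + k; elim: k y => [|k IH] y xy.
  rewrite expr0 mxE; case: eqVneq => // exy.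
  by case: xy; rewrite exy; constructor.
rewrite exprSr -mulmxE mxE big1 // => z _.
have [xz|] := pselect (reachable x z); last by move/IH->; rewrite mul0r.
have [ezy|zy] := eqVneq z y; first by case: xy; rewrite -ezy.
have := L_ge0 _ _ zy; rewrite le_eqVlt => /predU1P[<-|Lzy]; first by rewrite mulr0.
by case: xy; exact: reachable_rcons xz zy Lzy.
Qed.

End Reachability.

Lemma ergodic_reachable (R : realType) (d : nat) (L : 'M[R]_d) :
  intensity_matrix L -> ergodic_intensity L -> forall x y, reachable L x y.
Proof.
move=> [L_ge0 _] [mu [mu_gt0 cvg_mu]] x y; apply: contrapT => xy.
have trans0 : (fun t => trans_entry L t x y) = fun=> 0.
  apply: funext => t; rewrite /trans_entry.
  rewrite [X in lim (X @ _)](_ : _ = fun=> 0) ?lim_cst //.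
  by apply: funext => m; rewrite big1 // => k _; rewrite unreachable_expr_eq0 ?mulr0.
have trans_cvg0 : trans_entry L t x y @[t --> +oo] --> (0 : R).
  by rewrite trans0; exact: cvg_cst.
have /(_ _) muy0 := cvg_unique _ (cvg_mu x y) trans_cvg0.
by have := mu_gt0 y; rewrite muy0 ?ltxx.
Qed.

Section Coalescence.
Variables (R : numDomainType) (d : nat) (L : 'M[R]_d).

Definition move_state (e : 'I_d * 'I_d) (x : 'I_d) := if x == e.1 then e.2 else x.

Definition run_moves (q : seq ('I_d * 'I_d)) (x : 'I_d) :=
  foldl (fun y e => move_state e y) x q.

Definition rate_edge (e : 'I_d * 'I_d) := (e.1 != e.2) && (0 < L e.1 e.2).

Lemma run_moves_cat q1 q2 x : run_moves (q1 ++ q2) x = run_moves q2 (run_moves q1 x).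
Proof. exact: foldl_cat. Qed.

Lemma run_moves_rcons q e x : run_moves (rcons q e) x = move_state e (run_moves q x).
Proof. exact: foldl_rcons. Qed.

Lemma reachable_merge x y : reachable L x y ->
  exists2 q, all rate_edge q & run_moves q x = run_moves q y.
Proof.
elim=> [u|u v w uv Luv _ [q rq quw]]; first by exists [::].
have [->|wu] := eqVneq w u; first by exists [::].
exists ((u, v) :: q); first by rewrite /= /rate_edge uv Luv.
by rewrite /= /move_state /= eqxx (negbTE wu).
Qed.

Lemma coalescing_moves_seq (xs : seq 'I_d) : (forall x y, reachable L x y) ->
  exists2 q, all rate_edge q & {in xs &, forall x y, run_moves q x = run_moves q y}.
Proof.
move=> reach; elim: xs => [|x [|y xs] [q rq qxs]]; first by exists [::].
  by exists [::] => // u v; rewrite !inE => /eqP-> /eqP->.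
have [q' rq' qq'] := reachable_merge (reach (run_moves q x) (run_moves q y)).
exists (q ++ q'); first by rewrite all_cat rq rq'.
suff to_y u : u \in [:: x, y & xs] -> run_moves (q ++ q') u = run_moves (q ++ q') y.
  by move=> u v /to_y-> /to_y->.
rewrite run_moves_cat inE => /predU1P[->|uxs]; first by rewrite run_moves_cat qq'.
by rewrite (qxs u y) ?inE ?eqxx ?run_moves_cat.
Qed.

Lemma coalescing_moves : (forall x y, reachable L x y) ->
  exists2 q, all rate_edge q & forall x y, run_moves q x = run_moves q y.
Proof.
move=> /(coalescing_moves_seq (enum 'I_d))[q rq qd].
by exists q => // x y; apply: qd; rewrite mem_enum.
Qed.

End Coalescence.

Section MoveIncrement.
Context {R : ringType} {d : nat}.

Definition move_increment (e : 'I_d * 'I_d) (y l : 'I_d) : R :=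
  if y == l then - (y == e.1)%:R else ((y, l) == e)%:R.

Lemma move_increment_row (e : 'I_d * 'I_d) y : e.1 != e.2 ->
  \sum_(c < d | c != y) ((y, c) == e)%:R = (y == e.1)%:R :> R.
Proof.
case: e => u v /= uv; have [->|yu] := eqVneq y u.
- rewrite (bigD1 v) 1?eq_sym //= eqxx big1 ?addr0 // => c /andP[_ cv].
  by rewrite xpair_eqE eqxx (negbTE cv).
- by rewrite big1 // => c _; rewrite xpair_eqE (negbTE yu).
Qed.

Lemma move_increment_indicator (e : 'I_d * 'I_d) y l : e.1 != e.2 ->
  (y == l)%:R + move_increment e y l = (move_state e y == l)%:R :> R.
Proof.
case: e => u v /= uv; rewrite /move_increment /move_state /=.
have [<-|yl] := eqVneq y l; have [->|yu] := eqVneq y u => /=.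
- by rewrite subrr eq_sym (negbTE uv).
- by rewrite subr0 eqxx.
- by rewrite xpair_eqE eqxx /= add0r; case: eqVneq.
- by rewrite xpair_eqE (negbTE yu) (negbTE yl) addr0.
Qed.

End MoveIncrement.

Section IndependentTrials.
Variables (R : realType) (dm : measure_display) (Omega : measurableType dm).
Variables (P : probability Omega R) (G : nat -> set Omega) (p : R).

Definition all_selected (K : nat) (s : nat -> bool) : set Omega :=
  \bigcap_(b in [set b | (b < K)%N && s b]) G b.

Definition none_before (n : nat) : set Omega := \bigcap_(b in `I_n) ~` G b.

Hypothesis G_meas : forall b, measurable (G b).
Hypothesis P_all_selected : forall K s,
  P (all_selected K s) = (p ^+ (\sum_(b < K) s b))%:E.

Lemma all_selected_meas K s : measurable (all_selected K s).
Proof. by apply: bigcap_measurableType => b _; exact: G_meas. Qed.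

Lemma none_before_meas n : measurable (none_before n).
Proof. by apply: bigcap_measurableType => b _; exact/measurableC/G_meas. Qed.

Lemma P_none_before_selected n K (s : nat -> bool) : (n <= K)%N ->
  (forall b, (b < n)%N -> ~~ s b) ->
  P (none_before n `&` all_selected K s) =
  ((1 - p) ^+ n * p ^+ (\sum_(b < K) s b))%:E.
Proof.
elim: n s => [|n IH] s nK sn.
  rewrite [none_before 0](_ : _ = setT) ?setTI ?P_all_selected ?mul1r //.
  by apply/seteqP; split=> // w _ b /=; rewrite /= ltn0.
pose s' b := (b == n) || s b.
have s'E : (none_before n `&` all_selected K s) `&` G n =
    none_before n `&` all_selected K s'.
  apply/seteqP; split=> w /=.
    by move=> [[nG sG] Gn]; split=> // b /andP[bK /predU1P[->//|sb]]; apply: sG; rewrite /= bK.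
  move=> [nG sG]; split; last by apply: sG; rewrite /= nK /s' eqxx.
  by split=> // b /andP[bK sb]; apply: sG; rewrite /= bK /s' sb orbT.
have sum_s' : (\sum_(b < K) s' b = (\sum_(b < K) s b).+1)%N.
  rewrite (bigD1 (Ordinal nK)) //= /s' eqxx (negbTE (sn n (ltnSn n))) /= add1n.
  rewrite [in RHS](bigD1 (Ordinal nK)) //= (negbTE (sn n (ltnSn n))) add0n.
  by congr _.+1; apply: eq_bigr => b /negbTE; rewrite -val_eqE /= => ->.
have sn' b : (b < n)%N -> ~~ s b by move=> bn; exact: sn (ltnW _).
have P_s : P (none_before n `&` all_selected K s) =
    ((1 - p) ^+ n * p ^+ (\sum_(b < K) s b))%:E := IH s (ltnW nK) sn'.
have P_s' : P (none_before n `&` all_selected K s') =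
    ((1 - p) ^+ n * p ^+ (\sum_(b < K) s b).+1)%:E.
  by rewrite IH -?sum_s' ?(ltnW nK) // => b bn; rewrite /s' (ltn_eqF bn) sn'.
have splitD : none_before n.+1 `&` all_selected K s =
    (none_before n `&` all_selected K s) `\` G n.
  apply/seteqP; split=> w /=.
    move=> [nG sG]; split; last by apply: nG; rewrite /= ltnS.
    by split=> // b /= bn; apply: nG; rewrite /= ltnW.
  move=> [[nG sG] nGn]; split=> // b /=; rewrite ltnS leq_eqVlt => /predU1P[->//|].
  exact: nG.
have meas := measurableI _ _ (none_before_meas n) (all_selected_meas K s).
have : P (none_before n.+1 `&` all_selected K s) =
    (P (none_before n `&` all_selected K s) - P (none_before n `&` all_selected K s'))%E.
  rewrite splitD -s'E; apply: measureD => //.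
  by apply: le_lt_trans (probability_le1 P meas) _; rewrite ltry.
by rewrite P_s P_s' => ->; rewrite -EFinB !exprS; congr _%:E; ring.
Qed.

Lemma P_none_before n : P (none_before n) = ((1 - p) ^+ n)%:E.
Proof.
have := @P_none_before_selected n n (fun=> false) (leqnn n) (fun _ _ => isT).
rewrite big1 // mulr1 => <-; congr (P _).
by apply/seteqP; split=> [w nG|w []//]; split=> // b /=; rewrite andbF.
Qed.

Lemma success_prob_le1 : p <= 1.
Proof. by rewrite -subr_ge0 -lee_fin -(expr1 (1 - p)) -P_none_before measure_ge0. Qed.

Lemma P_no_success : 0 < p -> P (\bigcap_b ~` G b) = 0.
Proof.
move=> p_gt0.
have never_meas : measurable (\bigcap_b ~` G b).
  by apply: bigcapT_measurable => b; exact/measurableC/G_meas.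
have le_geo (n : nat) : (P (\bigcap_b ~` G b) <= ((1 - p) ^+ n)%:E)%E.
  rewrite -P_none_before; apply: le_measure; rewrite ?inE ?never_meas //.
  - exact: none_before_meas.
  - by move=> w nG b _; exact: nG.
have geo0 : (1 - p) ^+ n @[n --> \oo] --> 0.
  by apply: cvg_expr; rewrite ger0_norm ?subr_ge0 ?success_prob_le1 // gtrBl.
apply/le_anti; rewrite measure_ge0 andbT.
rewrite -[P _]fineK ?fin_num_measure // lee_fin.
apply: cvgr_to_ge geo0 _; exists 0%N => // n _ /=.
by rewrite -lee_fin fineK ?fin_num_measure.
Qed.
End IndependentTrials.

Lemma prodr_cond_const (R : comSemiRingType) (x : R) (s : nat -> bool) K :
  \prod_(b < K) (if s b then x else 1) = x ^+ (\sum_(b < K) s b).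
Proof.
elim: K => [|K IH]; first by rewrite !big_ord0 expr0.
by rewrite !big_ord_recr /= IH exprD; case: (s K); rewrite ?expr1 ?expr0 ?mulr1.
Qed.

Lemma prodr_blocks (R : comSemiRingType) (m K : nat) (F : nat -> R) (s : nat -> bool) :
  \prod_(k < K * m) (if s (k %/ m)%N then F (k %% m)%N else 1)
  = \prod_(b < K) (if s b then \prod_(j < m) F j else 1).
Proof.
have [->|m_gt0] := posnP m.
  by rewrite muln0 big_ord0 big1 // => b _; rewrite big_ord0; case: ifP.
elim: K => [|K IH]; first by rewrite mul0n !big_ord0.
rewrite big_ord_recr /= -IH mulSnr big_split_ord /=; congr (_ * _).
have blockE (j : 'I_m) : ((K * m + j) %/ m)%N = K by rewrite divnMDl // divn_small ?addn0.
have posE (j : 'I_m) : ((K * m + j) %% m)%N = j by rewrite modnMDl modn_small.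
under eq_bigr do rewrite blockE posE.
by case: (s K) => //; rewrite big1.
Qed.

Definition poisson_pmf (R : realType) (lam : R) (k : nat) : R :=
  expR (- lam) * lam ^+ k / (k`!)%:R.

Lemma poisson_pmf0 (R : realType) (lam : R) : poisson_pmf lam 0 = expR (- lam).
Proof. by rewrite /poisson_pmf expr0 mulr1 divr1. Qed.

Lemma poisson_pmf_gt0 (R : realType) (lam : R) k :
  0 < lam -> 0 < poisson_pmf lam k.
Proof.
by move=> lam_gt0; rewrite divr_gt0 ?mulr_gt0 ?expR_gt0 ?exprn_gt0 ?ltr0n ?fact_gt0.
Qed.

Section BlockEvents.
Variables (R : realType) (dm : measure_display) (Omega : measurableType dm).
Variables (P : probability Omega R) (d : nat) (L : 'M[R]_d).
Variables (N : 'I_d -> 'I_d -> R -> Omega -> R) (eta0 eta0' : Omega -> 'I_d).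
Variable (q : seq ('I_d * 'I_d)).
Hypothesis N_poisson : forall a c, a != c -> poisson_process P (L a c) (N a c).
Hypothesis N_indep : joint_indep P N eta0 eta0'.
Hypothesis q_rate : all (rate_edge L) q.

Definition prescribed_jumps (j : nat) (a c : 'I_d) : nat := (a, c) == nth (a, a) q j.

(* Slot [k] is the time interval [[k, k + 1]]; block [b] is made of the slots
   [b * size q + j], [j < size q], and succeeds when in its [j]-th slot the
   counter of the [j]-th move of [q] jumps once and no other counter moves. *)
Definition slot_event (k : nat) (a c : 'I_d) : set Omega :=
  [set w | N a c k.+1%:R w - N a c k%:R w = (prescribed_jumps (k %% size q) a c)%:R].

Definition block_event (b : nat) : set Omega := [set w | forall j, (j < size q)%N ->
  forall a c, a != c -> slot_event (b * size q + j) a c w].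

Definition slot_prob (j : nat) : R := \prod_(ac : 'I_d * 'I_d)
  (if ac.1 == ac.2 then 1 else poisson_pmf (L ac.1 ac.2) (prescribed_jumps j ac.1 ac.2)).

Definition block_prob : R := \prod_(j < size q) slot_prob j.

Lemma slot_event_meas k a c : a != c -> measurable (slot_event k a c).
Proof.
move=> ac; have [N_meas _] := N_poisson ac; rewrite -[slot_event _ _ _]setTI.
exact: (measurable_funB (N_meas _) (N_meas _)) (measurable_set1 _).
Qed.

Lemma P_slot_event k a c : a != c ->
  P (slot_event k a c) = (poisson_pmf (L a c) (prescribed_jumps (k %% size q) a c))%:E.
Proof.
move=> ac; have [_ [_ _ _ _ P_incr]] := N_poisson ac.
by rewrite /slot_event P_incr ?ler_nat // -natrB // subSnn mulr1.
Qed.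

Lemma block_prob_gt0 : 0 < block_prob.
Proof.
apply: prodr_gt0 => j _; apply: prodr_gt0 => -[a c] _ /=.
case: eqVneq => // ac; rewrite /prescribed_jumps.
case: eqP => [qj|_]; last by rewrite poisson_pmf0 expR_gt0.
apply: poisson_pmf_gt0.
by have /andP[] := allP q_rate _ (mem_nth (a, a) (ltn_ord j)); rewrite -qj.
Qed.

Lemma block_event_meas b : measurable (block_event b).
Proof.
have -> : block_event b = \bigcap_(x in [set x : 'I_d * 'I_d * 'I_(size q) | x.1.1 != x.1.2])
    slot_event (b * size q + x.2) x.1.1 x.1.2.
  apply/seteqP; split=> [w Bw [[a c] j] /= ac|w Bw j jq a c ac]; first exact: Bw.
  exact: (Bw (a, c, Ordinal jq)).
apply: fin_bigcap_measurable => [|[[a c] j] /= ac]; first exact: finite_finset.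
exact: slot_event_meas.
Qed.

Definition slot_set K (s : nat -> bool) (x : 'I_d * 'I_d * 'I_(K * size q) + bool) :
    set Omega :=
  if x is inl (a, c, k) then
    if (a != c) && s (k %/ size q)%N then slot_event k a c else setT
  else setT.
Arguments slot_set : clear implicits.

Lemma all_selected_slots K s :
  all_selected block_event K s = \bigcap_x slot_set K s x.
Proof.
apply/seteqP; split=> w /=.
  move=> Bw [[[a c] k]|] // _ /=; case: ifPn => // /andP[ac sk].
  have q_gt0 : (0 < size q)%N.
    by have := ltn_ord k; move: (k : nat) => k'; case: (size q) => //; rewrite muln0.
  have kK : (k %/ size q < K)%N && s (k %/ size q)%N by rewrite sk andbT ltn_divLR ?ltn_ord.
  by have := Bw _ kK _ (ltn_pmod k q_gt0) a c ac; rewrite -divn_eq.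
move=> Sw b /andP[bK sb] j jq a c ac.
have jK : (b * size q + j < K * size q)%N.
  by rewrite (leq_trans (_ : _ < b.+1 * size q)%N) ?leq_mul2r ?bK ?orbT // mulSnr ltn_add2l.
have := Sw (inl (a, c, Ordinal jK)) I; rewrite /= ac /=.
by rewrite divnMDl ?divn_small ?addn0 ?sb //; exact: leq_ltn_trans jq.
Qed.

Lemma P_slot_set K s (ac : 'I_d * 'I_d) (k : 'I_(K * size q)) :
  fine (P (slot_set K s (inl (ac, k)))) =
  if s (k %/ size q)%N then
    if ac.1 == ac.2 then 1
    else poisson_pmf (L ac.1 ac.2) (prescribed_jumps (k %% size q) ac.1 ac.2)
  else 1.
Proof.
case: ac => a c; rewrite /slot_set /=.
by case: eqVneq => [_|ac]; case: (s _); rewrite ?probability_setT ?P_slot_event.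
Qed.

Lemma P_all_selected_blocks K s :
  P (all_selected block_event K s) = (block_prob ^+ (\sum_(b < K) s b))%:E.
Proof.
have prod_rule : fine (P (\bigcap_x slot_set K s x)) =
    \prod_x fine (P (slot_set K s x)).
  apply: (N_indep (n := K * size q) (t := fun k => k%:R)) => // [k|].
    by rewrite ler_nat.
  case=> [[[a c] k]|[]] /=; last 2 first.
  - by exists setT; rewrite ?preimage_setT.
  - by exists setT; rewrite ?preimage_setT.
  case: eqVneq => //= ac; case: (s _) => /=.
  - by exists [set (prescribed_jumps (k %% size q) a c)%:R]; first exact: measurable_set1.
  - by exists setT; [exact: measurableT | rewrite preimage_setT].
rewrite -[LHS]fineK ?fin_num_measure //; last exact: all_selected_meas block_event_meas _ _.
rewrite all_selected_slots prod_rule big_sumType /= [X in _ * X]big1 ?mulr1 => [|b _];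
  last by rewrite probability_setT.
rewrite (eq_bigr (fun x => fine (P (slot_set K s (inl (x.1, x.2)))))) => [|[]//].
rewrite -(pair_bigA _ (fun ac k => fine (P (slot_set K s (inl (ac, k)))))) exchange_big.
rewrite -prodr_cond_const -prodr_blocks; congr _%:E.
apply: eq_bigr => k _; under eq_bigr do rewrite P_slot_set.
by case: (s _) => //; rewrite big1.
Qed.

Lemma P_no_block_event : P (\bigcap_b ~` block_event b) = 0.
Proof.
apply: P_no_success block_prob_gt0.
- exact: block_event_meas.
- exact: P_all_selected_blocks.
Qed.

Lemma ae_some_block_event : {ae P, forall w, exists b, block_event b w}.
Proof.
exists (\bigcap_b ~` block_event b); split.
- by apply: bigcapT_measurable => b; apply: measurableC; exact: block_event_meas.
- exact: P_no_block_event.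
- by move=> w /= no_block b _ Bw; apply: no_block; exists b.
Qed.

End BlockEvents.

Section CountingPaths.
Variables (R : realType) (d : nat) (N : 'I_d -> 'I_d -> R -> R).
Hypothesis N_at0 : forall a c, a != c -> N a c 0 = 0.
Hypothesis N_nondecr : forall a c, a != c ->
  forall s t, 0 <= s -> s <= t -> N a c s <= N a c t.
Hypothesis N_nat : forall a c, a != c -> forall t, 0 <= t -> exists n : nat, N a c t = n%:R.
Hypothesis N_right_cont : forall a c, a != c -> forall t, 0 <= t ->
  N a c x @[x --> t^'+] --> N a c t.
Hypothesis N_diag : forall a t, N a a t = - \sum_(c < d | c != a) N a c t.

Definition total_jumps t := \sum_(ac : 'I_d * 'I_d | ac.1 != ac.2) N ac.1 ac.2 t.
Definition jump_count t := Num.truncn (total_jumps t).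

Lemma jump_countE t : 0 <= t -> (jump_count t)%:R = total_jumps t.
Proof.
move=> t0; rewrite truncnK //; apply: rpred_sum => ac ac_off.
by have [n ->] := N_nat ac_off t0; exact: natr_nat.
Qed.

Lemma jump_count_nondecr s t : 0 <= s -> s <= t -> (jump_count s <= jump_count t)%N.
Proof. by move=> s0 st; apply/le_truncn/ler_sum => ac ac_off; exact: N_nondecr. Qed.

Lemma lt_of_jump_count_lt s t : 0 <= t -> (jump_count s < jump_count t)%N -> s < t.
Proof. by move=> t0; apply: contraTT; rewrite -!leNgt -leqNgt; exact: jump_count_nondecr. Qed.

Lemma N_eq_of_jump_count_eq s t : 0 <= s -> s <= t -> jump_count s = jump_count t ->
  forall a c, N a c s = N a c t.
Proof.
move=> s0 st count_st.
have off a c : a != c -> N a c s = N a c t.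
  move=> ac; apply/eqP; rewrite eq_sym -subr_eq0; apply/eqP.
  apply: (@psumr_eq0P _ _ (fun ac : 'I_d * 'I_d => ac.1 != ac.2)
    (fun ac => N ac.1 ac.2 t - N ac.1 ac.2 s) _ _ (a, c)) => // [[a' c'] /= a'c'|].
    by rewrite subr_ge0 N_nondecr.
  rewrite sumrB -/(total_jumps t) -/(total_jumps s).
  by rewrite -!jump_countE ?(le_trans s0 st) // count_st subrr.
move=> a c; have [<-|/off//] := eqVneq a c.
by rewrite !N_diag; congr (- _); apply: eq_bigr => c' c'a; rewrite off // eq_sym.
Qed.

Lemma jump_count0 : jump_count 0 = 0%N.
Proof. by rewrite /jump_count /total_jumps big1 ?truncn0 // => ac /N_at0. Qed.

Lemma jump_count_right_const t : 0 <= t ->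
  exists2 e, 0 < e & forall x, t < x < t + e -> jump_count x = jump_count t.
Proof.
move=> t0.
have C_right_cont : total_jumps x @[x --> t^'+] --> total_jumps t.
  apply: (@cvg_big R _ +%R 0 (fun ac : 'I_d * 'I_d => ac.1 != ac.2) add_continuous).
  by move=> ac ac_off; exact: N_right_cont.
move/cvgrPdist_lt : C_right_cont => /(_ 1 ltr01).
rewrite near_withinE => -[e /= e_gt0 near_t]; exists e => // x /andP[tx xte].
have x0 : 0 <= x by rewrite (le_trans t0) ?ltW.
have /= := near_t x; rewrite distrC ger0_norm ?subr_ge0 ?ltW // ltrBlDl.
rewrite -!jump_countE // distrC -natrB ?jump_count_nondecr ?(ltW tx) // ger0_norm // ltrn1.
move=> /(_ xte tx); rewrite ltnS leqn0 subn_eq0 => le_xt.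
apply/eqP; rewrite eqn_leq le_xt jump_count_nondecr ?(ltW tx) //.
Qed.

Definition level_attained (l : nat) := exists2 s, 0 <= s & jump_count s = l.

Definition level_time (l : nat) := xget 0 [set s | 0 <= s /\ jump_count s = l].

Lemma level_timeP l : level_attained l -> 0 <= level_time l /\ jump_count (level_time l) = l.
Proof.
by move=> [s s0 sl]; apply: (@xgetPex _ 0 [set s | 0 <= s /\ jump_count s = l]); exists s.
Qed.

Definition N_at_level l a c := N a c (level_time l).

Lemma N_at_levelE s a c : 0 <= s -> N_at_level (jump_count s) a c = N a c s.
Proof.
move=> s0; have [ls0 lsE] := level_timeP (ex_intro2 _ _ s s0 erefl).
rewrite /N_at_level; have [ls_s|s_ls] := leP (level_time (jump_count s)) s.
- exact: N_eq_of_jump_count_eq.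
- by symmetry; apply: N_eq_of_jump_count_eq => //; exact: ltW.
Qed.

Lemma level_gap c : exists2 e, 0 < e & forall l, (l < c)%N -> level_attained l ->
  forall x, level_time l < x < level_time l + e -> jump_count x = l.
Proof.
elim: c => [|c [e e_gt0 IH]]; first by exists 1.
have [c_att|c_natt] := pselect (level_attained c); last first.
  by exists e => // l; rewrite ltnS leq_eqVlt => /predU1P[->//|]; exact: IH.
have [lc0 lcE] := level_timeP c_att; have [e' e'_gt0 rc] := jump_count_right_const lc0.
exists (Num.min e e'); first by rewrite lt_min e_gt0 e'_gt0.
move=> l; rewrite ltnS leq_eqVlt => /predU1P[->|lc] l_att x /andP[lx xle].
- by rewrite -lcE; apply: rc; rewrite lx (lt_le_trans xle) // lerD2l ge_min lexx orbT.
- by apply: IH => //; rewrite lx (lt_le_trans xle) // lerD2l ge_min lexx.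
Qed.

Lemma no_level_between c : exists2 e, 0 < e & forall u v, 0 <= u -> u <= v -> v - u < e ->
  (jump_count v <= c)%N -> forall l, (jump_count u < l < jump_count v)%N -> ~ level_attained l.
Proof.
have [e e_gt0 gap] := level_gap c; exists e => // u v u0 uv vu vc l /andP[ul lv] l_att.
have [l0 lE] := level_timeP l_att.
have u_l : u < level_time l by apply: lt_of_jump_count_lt; rewrite ?lE.
have l_v : level_time l < v by apply: lt_of_jump_count_lt; rewrite ?lE ?(le_trans u0 uv).
have := gap l (leq_trans lv vc) l_att v; rewrite l_v -ltrBlDl => /(_ (le_lt_trans _ vu)).
by rewrite lerD2l lerN2 ltW // => /(_ isT) vl; rewrite vl ltnn in lv.
Qed.

Section PathwiseSolution.
Variable e0 : 'I_d.

Definition jump_update (W : 'I_d -> R) (D : 'I_d -> 'I_d -> R) : 'I_d -> R :=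
  fun j => W j + \sum_i W i * D i j.

(* The state once the jump count has reached [l], paired with the last attained
   level [<= l]: a level is skipped when several counters jump simultaneously. *)
Fixpoint chain_rec (l : nat) : ('I_d -> R) * nat :=
  if l is l'.+1 then
    let: (W, last) := chain_rec l' in
    if `[< level_attained l >] then
      (jump_update W (fun a c => N_at_level l a c - N_at_level last a c), l)
    else (W, last)
  else (fun j => (e0 == j)%:R, 0%N).

Definition chain_state l := (chain_rec l).1.

Lemma chain_rec_attained l : level_attained l -> (chain_rec l).2 = l.
Proof. by case: l => [//|l] l_att; rewrite /= (surjective_pairing (chain_rec l)) asboolT. Qed.

Lemma chain_rec_skip l k : (l <= k)%N ->
  (forall k', (l < k' <= k)%N -> ~ level_attained k') -> chain_rec k = chain_rec l.
Proof.
elim: k => [|k IH] lk natt; first by rewrite leqn0 in lk; rewrite (eqP lk).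
have [->//|lk1] := eqVneq l k.+1.
have {}lk : (l <= k)%N by rewrite leq_eqVlt (negbTE lk1) in lk.
rewrite /= (surjective_pairing (chain_rec k)) asboolF; last first.
  by apply: natt; rewrite ltnS lk leqnn.
by rewrite -surjective_pairing IH // => k' /andP[lk' k'k]; apply: natt; rewrite lk' ltnW.
Qed.

Lemma chain_state_next l l' : level_attained l -> level_attained l' -> (l < l')%N ->
  (forall k, (l < k < l')%N -> ~ level_attained k) ->
  chain_state l' =
    jump_update (chain_state l) (fun a c => N_at_level l' a c - N_at_level l a c).
Proof.
case: l' => [//|l'] l_att l'_att ll' natt.
have skip : chain_rec l' = chain_rec l.
  by apply: chain_rec_skip => // k /andP[lk kl']; apply: natt; rewrite lk.
rewrite /chain_state /= (surjective_pairing (chain_rec l')) asboolT //.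
by rewrite skip chain_rec_attained.
Qed.

Lemma chain_increment u v : 0 <= u -> u <= v ->
  (forall l, (jump_count u < l < jump_count v)%N -> ~ level_attained l) ->
  chain_state (jump_count v) =
    jump_update (chain_state (jump_count u)) (fun a c => N a c v - N a c u).
Proof.
move=> u0 uv natt; have v0 := le_trans u0 uv.
have [uv_eq|uv_neq] := eqVneq (jump_count u) (jump_count v).
  rewrite -uv_eq; apply: funext => j; rewrite /jump_update big1 ?addr0 // => i _.
  by rewrite (N_eq_of_jump_count_eq u0 uv uv_eq) subrr mulr0.
rewrite (@chain_state_next (jump_count u) (jump_count v)) //.
- by apply: funext => j; congr (_ + _); apply: eq_bigr => i _; rewrite !N_at_levelE.
- by exists u.
- by exists v.
- by rewrite ltn_neqAle uv_neq jump_count_nondecr.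
Qed.

Lemma N_row_sum s i : \sum_j N i j s = 0.
Proof. by rewrite (bigD1 i) //= N_diag addNr. Qed.

Lemma jump_update_sum W D : (forall i, \sum_j D i j = 0) ->
  \sum_j jump_update W D j = \sum_j W j.
Proof.
move=> D_row0; rewrite big_split /= exchange_big /= [X in _ + X]big1 ?addr0 // => i _.
by rewrite -mulr_sumr D_row0 mulr0.
Qed.

Lemma chain_state_sum l : \sum_j chain_state l j = 1.
Proof.
rewrite /chain_state; elim: l => [|l IH] /=.
  by rewrite (bigD1 e0) //= eqxx big1 ?addr0 // => j /negbTE; rewrite eq_sym => ->.
rewrite (surjective_pairing (chain_rec l)); case: asboolP => _ //=.
by rewrite jump_update_sum // => i; rewrite sumrB /N_at_level !N_row_sum subrr.
Qed.

Variable g : R -> 'I_d -> R.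

Definition riemann_sum (t : R) (j : 'I_d) (m : nat) : R :=
  \sum_(k < m) \sum_(i < d) g (k%:R * t / m%:R) i *
       (N i j (k.+1%:R * t / m%:R) - N i j (k%:R * t / m%:R)).

Lemma grid_increment u v j : 0 <= u -> u <= v ->
  (forall l, (jump_count u < l < jump_count v)%N -> ~ level_attained l) ->
  ((jump_count u < jump_count v)%N -> g u = chain_state (jump_count u)) ->
  \sum_i g u i * (N i j v - N i j u) =
    chain_state (jump_count v) j - chain_state (jump_count u) j.
Proof.
move=> u0 uv natt g_u; have [uv_eq|uv_neq] := eqVneq (jump_count u) (jump_count v).
  rewrite uv_eq subrr big1 // => i _.
  by rewrite (N_eq_of_jump_count_eq u0 uv uv_eq) subrr mulr0.
rewrite (chain_increment u0 uv natt) g_u ?ltn_neqAle ?uv_neq ?jump_count_nondecr //.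
by rewrite /jump_update addrAC subrr add0r.
Qed.

(* Once the mesh is below the gaps between the jump times up to [t], each term
   crosses at most one attained level, so the sum telescopes. *)
Lemma riemann_sum_eventually t j : 0 <= t ->
  (forall s, 0 <= s -> (jump_count s < jump_count t)%N -> g s = chain_state (jump_count s)) ->
  \forall m \near \oo,
    riemann_sum t j m = chain_state (jump_count t) j - chain_state 0 j.
Proof.
move=> t0 IH; have [e e_gt0 natt] := no_level_between (jump_count t).
exists (Num.truncn (t / e)).+1 => // m /= m_large.
have m_gt0 : 0 < m%:R :> R by rewrite ltr0n (leq_trans _ m_large).
pose x k := k%:R * t / m%:R.
have x_ge0 k : 0 <= x k by rewrite /x divr_ge0 ?mulr_ge0 ?(ltW m_gt0).
have x_le k : (k <= m)%N -> x k <= t.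
  by move=> km; rewrite ler_pdivrMr // mulrC ler_wpM2l ?ler_nat.
have x_step k : x k.+1 - x k = t / m%:R.
  by rewrite /x -!mulrBl mulrSr addrAC subrr add0r mul1r.
have mesh_lt : t / m%:R < e.
  rewrite ltr_pdivrMr // -ltr_pdivrMl // mulrC.
  by rewrite (lt_le_trans (truncnS_gt _)) // ler_nat.
have -> : riemann_sum t j m =
    \sum_(0 <= k < m) \sum_i g (x k) i * (N i j (x k.+1) - N i j (x k)).
  by rewrite /riemann_sum big_mkord.
rewrite (telescope_sumr_eq (fun k => chain_state (jump_count (x k)) j)) //; last first.
  move=> k /andP[_ km].
  have xk1 : x k <= x k.+1 by rewrite -subr_ge0 x_step divr_ge0 ?(ltW m_gt0).
  have cnt_le := jump_count_nondecr (x_ge0 k.+1) (x_le _ km).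
  apply: grid_increment => // [l|lt_k]; first by apply: natt; rewrite ?x_step.
  exact/IH/(leq_trans lt_k).
by rewrite /x mul0r mul0r jump_count0 mulrAC divff ?mul1r ?gt_eqF.
Qed.

Hypothesis g_solves : forall t, 0 <= t -> forall j,
  riemann_sum t j m @[m --> \oo] --> g t j - (e0 == j)%:R.

Lemma solution_step t : 0 <= t ->
  (forall s, 0 <= s -> (jump_count s < jump_count t)%N -> g s = chain_state (jump_count s)) ->
  g t = chain_state (jump_count t).
Proof.
move=> t0 IH; apply: funext => j; apply: (addIr (- (e0 == j)%:R)).
have sum_cvg : riemann_sum t j m @[m --> \oo] --> chain_state (jump_count t) j - (e0 == j)%:R.
  by apply: cvg_near_cst; exact: riemann_sum_eventually.
exact: cvg_unique _ (@g_solves t t0 j) sum_cvg.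
Qed.

Lemma solution_eq_chain t : 0 <= t -> g t = chain_state (jump_count t).
Proof.
suff solved c s : 0 <= s -> jump_count s = c -> g s = chain_state c.
  by move=> t0; exact: solved.
elim/ltn_ind: c s => c IH u u0 u_c; rewrite -u_c; apply: solution_step => // s s0.
by rewrite u_c => lt_sc; exact: IH lt_sc s s0 erefl.
Qed.

Lemma solution_jump u v : 0 <= u -> u <= v -> (jump_count v <= (jump_count u).+1)%N ->
  g v = jump_update (g u) (fun a c => N a c v - N a c u).
Proof.
move=> u0 uv cnt_uv; rewrite !solution_eq_chain ?(le_trans u0 uv) //.
apply: chain_increment => // l /andP[ul lv].
by have := leq_trans lv cnt_uv; rewrite ltnS leqNgt ul.
Qed.

Variables (q : seq ('I_d * 'I_d)) (s0 : nat).
Hypothesis q_offdiag : all (fun e : 'I_d * 'I_d => e.1 != e.2) q.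
Hypothesis N_slots : forall j, (j < size q)%N -> forall a c, a != c ->
  N a c (s0 + j).+1%:R - N a c (s0 + j)%:R = (prescribed_jumps q j a c)%:R.

Let slot_time (j : nat) : R := (s0 + j)%:R.

Lemma slot_move_offdiag j : (j < size q)%N -> (nth (e0, e0) q j).1 != (nth (e0, e0) q j).2.
Proof. by move=> jq; exact: (allP q_offdiag) _ (mem_nth (e0, e0) jq). Qed.

Lemma N_slot_increment j : (j < size q)%N -> forall y l,
  N y l (slot_time j.+1) - N y l (slot_time j) = move_increment (nth (e0, e0) q j) y l.
Proof.
move=> jq y l; have off := slot_move_offdiag jq.
have N_off a c : a != c ->
    N a c (slot_time j.+1) - N a c (slot_time j) = ((a, c) == nth (e0, e0) q j)%:R.
  move=> ac; rewrite /slot_time addnS N_slots //.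
  by rewrite /prescribed_jumps (set_nth_default (e0, e0)).
rewrite /move_increment; have [<-|yl] := eqVneq y l; last exact: N_off.
rewrite !N_diag opprK addrC -sumrB -(move_increment_row y off) -sumrN.
by apply: eq_bigr => c cy; rewrite -N_off 1?eq_sym // opprB.
Qed.


Lemma jump_count_slot j : (j < size q)%N ->
  jump_count (slot_time j.+1) = (jump_count (slot_time j)).+1.
Proof.
move=> jq; apply/eqP; rewrite -(eqr_nat R) mulrSr !jump_countE ?ler0n //.
rewrite addrC -subr_eq /total_jumps -sumrB.
rewrite (eq_bigr (fun ac => (ac == nth (e0, e0) q j)%:R)) => [|[a c] /= ac]; last first.
  by rewrite N_slot_increment // /move_increment (negbTE ac).
rewrite (bigD1 (nth (e0, e0) q j)) ?slot_move_offdiag //= eqxx big1 ?addr0 //.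
by move=> ac /andP[_ /negbTE->].
Qed.

Lemma solution_slot j : (j < size q)%N ->
  g (slot_time j.+1) = jump_update (g (slot_time j)) (move_increment (nth (e0, e0) q j)).
Proof.
move=> jq.
rewrite (@solution_jump (slot_time j)) ?ler0n ?ler_nat ?leq_add2l ?jump_count_slot //.
by congr jump_update; apply: funext => y; apply: funext => l; rewrite N_slot_increment.
Qed.

Lemma solution_in_block j : (j <= size q)%N -> forall l,
  g (slot_time j) l = \sum_x g (slot_time 0) x * (run_moves (take j q) x == l)%:R.
Proof.
elim: j => [|j IH] jq l.
  rewrite take0 (bigD1 l) //= eqxx mulr1 big1 ?addr0 // => x /negbTE xl.
  by rewrite xl mulr0.
rewrite (solution_slot jq) /jump_update.
under eq_bigr => i _ do rewrite (IH (ltnW jq) i) mulr_suml.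
rewrite IH ?(ltnW jq) // exchange_big -big_split (take_nth (e0, e0) jq).
apply: eq_bigr => x _ /=.
rewrite run_moves_rcons -(move_increment_indicator _ _ (slot_move_offdiag jq)) mulrDr.
congr (_ + _); rewrite (bigD1 (run_moves (take j q) x)) //= eqxx mulr1 big1 ?addr0 //.
by move=> i /negbTE; rewrite eq_sym => ->; rewrite mulr0 mul0r.
Qed.

Lemma solution_after_block : (forall x y, run_moves q x = run_moves q y) ->
  forall x l, g (slot_time (size q)) l = (run_moves q x == l)%:R.
Proof.
move=> coalesce x l; rewrite solution_in_block // take_size.
under eq_bigr => y _ do rewrite (coalesce y x).
by rewrite -mulr_suml solution_eq_chain ?ler0n // chain_state_sum mul1r.
Qed.

End PathwiseSolution. End CountingPaths.

Lemma indicator_le_cvg0 (R : realType) (x : \bar R) (T : R) : (x <= T%:E)%E ->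
  (fun n : nat => if (n%:R%:E <= x)%E then 1 else 0 : R) @ \oo --> 0.
Proof.
move=> xT; apply: cvg_near_cst; exists (Num.truncn T).+1 => // n /= Tn.
case: ifPn => // /le_trans/(_ xT); rewrite lee_fin => nT.
by have := le_lt_trans nT (truncnS_gt T); rewrite ltr_nat ltnS leqNgt Tn.
Qed.

Section Coupling.
Variables (R : realType) (dm : measure_display) (Omega : measurableType dm).
Variables (P : probability Omega R) (d : nat) (L : 'M[R]_d).
Variables (N : 'I_d -> 'I_d -> R -> Omega -> R) (q : seq ('I_d * 'I_d)).
Hypothesis N_poisson : forall a c, a != c -> poisson_process P (L a c) (N a c).
Hypothesis N_diag : forall (a : 'I_d) t w, N a a t w = - \sum_(c < d | c != a) N a c t w.
Hypothesis q_offdiag : all (fun e : 'I_d * 'I_d => e.1 != e.2) q.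
Hypothesis q_coalesce : forall x y, run_moves q x = run_moves q y.

Lemma solution_after_block_event w b (e0 : 'I_d) (eta : R -> Omega -> 'I_d -> R) :
  (forall t, 0 <= t -> forall j,
     ito_sum N eta t w j m @[m --> \oo] --> eta t w j - (e0 == j)%:R) ->
  block_event N q b w ->
  forall x, eta (b * size q + size q)%:R w = fun l => (run_moves q x == l)%:R.
Proof.
move=> eta_w Bw x; apply: funext => l.
have path a c (ac : a != c) := (N_poisson ac).2.
apply: (@solution_after_block R d (fun a c t => N a c t w) _ _ _ _ _ e0 (fun t => eta t w)
  _ q (b * size q)) => //.
- by move=> a c /path[].
- by move=> a c /path[_ + _ _ _]; apply.
- by move=> a c /path[_ _ + _ _]; apply.
- by move=> a c /path[_ _ _ + _]; apply.
- move=> j jq a c ac; have := Bw j jq a c ac.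
  by rewrite /slot_event /= modnMDl modn_small.
Qed.

End Coupling.

Lemma meet_time_le (R : realType) (Omega : Type) (d : nat) (a : 'I_d -> R)
    (eta eta' : R -> Omega -> 'I_d -> R) w (T : R) :
  0 <= T -> eta T w = eta' T w ->
  (meet_time (state_proc a eta) (state_proc a eta') w <= T%:E)%E.
Proof.
move=> T0 etaT; apply: ereal_inf_lbound; exists T => //.
by split=> //; rewrite /state_proc etaT.
Qed.

Unset Implicit Arguments.

Theorem lemma2p2 (R : realType) (dm : measure_display)
    (Omega : measurableType dm) (P : probability Omega R) (d : nat)
    (a : 'I_d -> R) (L : 'M[R]_d) (N : 'I_d -> 'I_d -> R -> Omega -> R)
    (eta0 eta0' : Omega -> 'I_d) (eta eta' : R -> Omega -> 'I_d -> R) :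
  injective a ->
  intensity_matrix L ->
  ergodic_intensity L ->
  (forall i j : 'I_d, i != j -> poisson_process P (L i j) (N i j)) ->
  (forall (i : 'I_d) t w, N i i t w = - \sum_(j < d | j != i) N i j t w) ->
  (forall i : 'I_d, measurable [set w | eta0 w = i]) ->
  (forall i : 'I_d, measurable [set w | eta0' w = i]) ->
  joint_indep P N eta0 eta0' ->
  solves_ito P N eta0 eta ->
  solves_ito P N eta0' eta' ->
  {ae P, forall w,
    (fun n : nat =>
       if (n%:R%:E <= meet_time (state_proc a eta) (state_proc a eta') w)%E
       then 1 else 0 : R) @ \oo --> 0}.
Proof.
move=> _ L_int L_erg N_poisson N_diag _ _ N_indep eta_solves eta'_solves.
have [q q_rate q_coalesce] := coalescing_moves (ergodic_reachable L_int L_erg).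
have q_offdiag : all (fun e : 'I_d * 'I_d => e.1 != e.2) q.
  by apply: sub_all q_rate => e /andP[].
have some_block := ae_some_block_event N_poisson N_indep q_rate.
move: eta_solves eta'_solves some_block; apply: filterS3 => w eta_w eta'_w [b Bw].
apply: (@indicator_le_cvg0 _ _ (b * size q + size q)%:R); apply: meet_time_le => //.
have after_block := solution_after_block_event N_poisson N_diag q_offdiag q_coalesce.
by rewrite (after_block _ _ _ _ eta_w Bw (eta0 w)) (after_block _ _ _ _ eta'_w Bw (eta0 w)).
Qed.
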